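(* The assignments $\Delta(E_i)=K_{\alpha_i}\otimes E_i+E_i\otimes K_{\alpha_i-\gamma_i}$, $\Delta(K_\lambda)=K_\lambda\otimes K_\lambda$, $\varepsilon(E_i)=0$, $\varepsilon(K_\lambda)=1$, $S(E_i)=-K_{-\alpha_i}E_iK_{\gamma_i-\alpha_i}$, $S(K_\lambda)=K_{-\lambda}$ ($i\in\mathbb{Z}$, $\lambda\in X$) extend to algebra homomorphisms $\Delta\colon U^+\to U^+\otimes U^+$, $\varepsilon\colon U^+\to\mathbb{Q}(q)$ and an algebra anti-homomorphism $S\colon U^+\to U^+$, and these endow $U^+$ with the structure of a Hopf algebra over $\mathbb{Q}(q)$.
   Context: $\mathbb{Q}(q)$ is the field of rational functions in $q$ over $\mathbb{Q}$; $[2]=q+q^{-1}$. For $i,j\in\mathbb{Z}$ put $b_{ij}=-2$ if $j\in\{i,i+1\}$ and $b_{ij}=4\,\mathrm{sgn}(j-i)(-1)^{j-i}$ otherwise. Let $\mathfrak{h}_{\mathbb{Z}}$ be the free $\mathbb{Z}$-module with basis $e_i$, $i\in\mathbb{Z}$, let $X=\mathrm{Hom}_{\mathbb{Z}}(\mathfrak{h}_{\mathbb{Z}},\mathbb{Z})$ (a group under pointwise addition) and $\langle\cdot,\cdot\rangle\colon X\times\mathfrak{h}_{\mathbb{Z}}\to\mathbb{Z}$ the evaluation. Put $\alpha_i^\vee=e_{i+1}-e_i$, let $\varepsilon_i\in X$ with $\langle\varepsilon_i,e_j\rangle=\delta_{ij}$, and $\alpha_i=\varepsilon_{i+1}-\varepsilon_i$.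 Define $\beta_i\in X$ by $\langle\beta_i,e_j\rangle=(-1)^i2$ if $j=i$, $\langle\beta_i,e_j\rangle=(-1)^i4$ if $j\ne i$ and $(-1)^jj>(-1)^ji$, and $\langle\beta_i,e_j\rangle=0$ otherwise; put $\gamma_i=-\beta_{i+1}$. The positive Borel part $U^+$ is the $\mathbb{Q}(q)$-algebra generated by $E_i$ ($i\in\mathbb{Z}$) and $K_\lambda$ ($\lambda\in X$) with relations $K_\lambda K_\mu=K_{\lambda+\mu}$, $K_0=1$, $K_\lambda E_i=q^{\langle\lambda,\alpha_i^\vee\rangle}E_iK_\lambda$, $E_iE_j=q^{b_{ij}}E_jE_i$ for $|i-j|>1$, $q^3E_i^2E_{i+1}-[2]E_iE_{i+1}E_i+q^{-3}E_{i+1}E_i^2=0$, $q^{-3}E_i^2E_{i-1}-[2]E_iE_{i-1}E_i+q^{3}E_{i-1}E_i^2=0$. *)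

From HB Require Import structures.
From mathcomp Require Import all_boot all_order all_algebra.
From mathcomp Require Import fraction.
Set Implicit Arguments. Unset Strict Implicit. Unset Printing Implicit Defensive.
Import Order.TTheory GRing.Theory Num.Theory.
Local Open Scope ring_scope.

Notation Qq := {fraction {poly rat}}.

Definition q : Qq := FracField.tofrac ('X : {poly rat}).

Definition q2 : Qq := q + q^-1.

Definition msign (k : int) : int := (-1) ^+ `|k|%N.

Definition bij (i j : int) : int :=
  if (j == i) || (j == i + 1) then -2
  else 4 * sgz (j - i) * msign (j - i).

(* X = Hom_Z(h_Z, Z) with h_Z free on e_i (i in Z): an element lambda of X
   is determined by its values lambda(e_j); we identify X with int -> int,
   <lambda, e_j> = lambda j, and the group law is pointwise addition. *)
Definition X := int -> int.
Definition Xadd (l m : X) : X := fun j => l j + m j.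
Definition Xopp (l : X) : X := fun j => - l j.
Definition Xzero : X := fun _ => 0.

(* <lambda, alpha_i^vee> with alpha_i^vee = e_{i+1} - e_i *)
Definition pair_coroot (l : X) (i : int) : int := l (i + 1) - l i.

Definition epsX (i : int) : X := fun j => if j == i then 1 else 0.
Definition alphaX (i : int) : X := Xadd (epsX (i + 1)) (Xopp (epsX i)).

Definition betaX (i : int) : X := fun j =>
  if j == i then msign i * 2
  else if msign j * i < msign j * j then msign i * 4
  else 0.
Definition gammaX (i : int) : X := Xopp (betaX (i + 1)).

Record Svs := SVS {
  vcar :> Type;
  veq : vcar -> vcar -> Prop;
  vadd : vcar -> vcar -> vcar;
  vscale : Qq -> vcar -> vcar;
  vzero : vcar }.

(* Free algebra / presented algebra: terms modulo the least congruence *)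
(* making them a unital associative Q(q)-algebra and imposing R.       *)

Inductive term (G : Type) : Type :=
  | tgen of G
  | tscal of Qq                 (* the scalar c * 1 *)
  | tadd of term G & term G
  | tmul of term G & term G.

Arguments tscal {G}.

Definition tsmul {G} (c : Qq) (t : term G) : term G := tmul (tscal c) t.

Inductive aeq (G : Type) (R : term G -> term G -> Prop)
  : term G -> term G -> Prop :=
  | aeq_rel t s : R t s -> aeq R t s
  | aeq_refl t : aeq R t t
  | aeq_sym t s : aeq R t s -> aeq R s t
  | aeq_trans t s u : aeq R t s -> aeq R s u -> aeq R t u
  | aeq_add t t' s s' : aeq R t t' -> aeq R s s' -> aeq R (tadd t s) (tadd t' s')
  | aeq_mul t t' s s' : aeq R t t' -> aeq R s s' -> aeq R (tmul t s) (tmul t' s')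
  | aeq_addA t s u : aeq R (tadd t (tadd s u)) (tadd (tadd t s) u)
  | aeq_addC t s : aeq R (tadd t s) (tadd s t)
  | aeq_add0 t : aeq R (tadd (tscal 0) t) t
  | aeq_addN t : aeq R (tadd t (tsmul (-1) t)) (tscal 0)
  | aeq_mulA t s u : aeq R (tmul t (tmul s u)) (tmul (tmul t s) u)
  | aeq_mul1l t : aeq R (tmul (tscal 1) t) t
  | aeq_mul1r t : aeq R (tmul t (tscal 1)) t
  | aeq_mulDl t s u : aeq R (tmul (tadd t s) u) (tadd (tmul t u) (tmul s u))
  | aeq_mulDr t s u : aeq R (tmul u (tadd t s)) (tadd (tmul u t) (tmul u s))
  | aeq_scalD a b : aeq R (tscal (a + b)) (tadd (tscal a) (tscal b))
  | aeq_scalM a b : aeq R (tscal (a * b)) (tmul (tscal a) (tscal b))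
  | aeq_scalC a t : aeq R (tmul (tscal a) t) (tmul t (tscal a)).

Inductive Ugen := gE of int | gK of X.

Notation Uterm := (term Ugen).
Definition E (i : int) : Uterm := tgen (gE i).
Definition K (l : X) : Uterm := tgen (gK l).

Inductive Urel : Uterm -> Uterm -> Prop :=
  | Urel_KK l m : Urel (tmul (K l) (K m)) (K (Xadd l m))
  | Urel_K0 : Urel (K Xzero) (tscal 1)
  | Urel_KE l i :
      Urel (tmul (K l) (E i)) (tsmul (q ^ pair_coroot l i) (tmul (E i) (K l)))
  | Urel_EE i j : (1 < `|i - j|)%N ->
      Urel (tmul (E i) (E j)) (tsmul (q ^ bij i j) (tmul (E j) (E i)))
  | Urel_Serre1 i :
      Urel (tadd (tadd
              (tsmul (q ^ 3) (tmul (tmul (E i) (E i)) (E (i + 1))))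
              (tsmul (- q2) (tmul (tmul (E i) (E (i + 1))) (E i))))
              (tsmul (q ^ (-3)) (tmul (tmul (E (i + 1)) (E i)) (E i))))
           (tscal 0)
  | Urel_Serre2 i :
      Urel (tadd (tadd
              (tsmul (q ^ (-3)) (tmul (tmul (E i) (E i)) (E (i - 1))))
              (tsmul (- q2) (tmul (tmul (E i) (E (i - 1))) (E i))))
              (tsmul (q ^ 3) (tmul (tmul (E (i - 1)) (E i)) (E i))))
           (tscal 0).

Definition Ueq : Uterm -> Uterm -> Prop := aeq Urel.

Definition Uvs : Svs := @SVS Uterm Ueq (@tadd Ugen) (@tsmul Ugen) (tscal 0).

(* Tensor product of setoid vector spaces: the free vector space on    *)
(* V x W modulo bilinearity (and compatibility with the equalities).   *)

Inductive tens (A B : Type) : Type :=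
  | tpure of A & B
  | tzero
  | tsum of tens A B & tens A B
  | tsc of Qq & tens A B.

Arguments tzero {A B}.

Inductive teq (V W : Svs) : tens V W -> tens V W -> Prop :=
  | teq_refl x : teq x x
  | teq_sym x y : teq x y -> teq y x
  | teq_trans x y z : teq x y -> teq y z -> teq x z
  | teq_sum x x' y y' : teq x x' -> teq y y' -> teq (tsum x y) (tsum x' y')
  | teq_sc c x x' : teq x x' -> teq (tsc c x) (tsc c x')
  | teq_sumA x y z : teq (tsum x (tsum y z)) (tsum (tsum x y) z)
  | teq_sumC x y : teq (tsum x y) (tsum y x)
  | teq_sum0 x : teq (tsum tzero x) x
  | teq_sumN x : teq (tsum x (tsc (-1) x)) tzero
  | teq_sc1 x : teq (tsc 1 x) x
  | teq_scM a b x : teq (tsc (a * b) x) (tsc a (tsc b x))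
  | teq_scDl a b x : teq (tsc (a + b) x) (tsum (tsc a x) (tsc b x))
  | teq_scDr a x y : teq (tsc a (tsum x y)) (tsum (tsc a x) (tsc a y))
  | teq_pure v v' w w' : veq v v' -> veq w w' -> teq (tpure v w) (tpure v' w')
  | teq_addl v v' w :
      teq (tpure (vadd v v') w) (tsum (tpure v w) (tpure v' w))
  | teq_addr v w w' :
      teq (tpure v (vadd w w')) (tsum (tpure v w) (tpure v w'))
  | teq_scl c v w : teq (tpure (vscale c v) w) (tsc c (tpure v w))
  | teq_scr c v w : teq (tpure v (vscale c w)) (tsc c (tpure v w)).

Definition tensor (V W : Svs) : Svs :=
  @SVS (tens V W) (@teq V W) (@tsum V W) (@tsc V W) tzero.

(* the linear map V (x) W -> C induced by a map f : V -> W -> C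
   (well defined when f is bilinear and compatible with equalities) *)
Fixpoint tlift (A B : Type) (C : Svs) (f : A -> B -> C) (x : tens A B) : C :=
  match x with
  | tpure a b => f a b
  | tzero => vzero C
  | tsum x1 x2 => vadd (tlift f x1) (tlift f x2)
  | tsc c x1 => vscale c (tlift f x1)
  end.

Fixpoint tmulP (A B : Type) (mA : A -> A -> A) (mB : B -> B -> B)
  (a : A) (b : B) (y : tens A B) : tens A B :=
  match y with
  | tpure a' b' => tpure (mA a a') (mB b b')
  | tzero => tzero
  | tsum y1 y2 => tsum (tmulP mA mB a b y1) (tmulP mA mB a b y2)
  | tsc c y1 => tsc c (tmulP mA mB a b y1)
  end.

Fixpoint tmulT (A B : Type) (mA : A -> A -> A) (mB : B -> B -> B)
  (x y : tens A B) : tens A B :=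
  match x with
  | tpure a b => tmulP mA mB a b y
  | tzero => tzero
  | tsum x1 x2 => tsum (tmulT mA mB x1 y) (tmulT mA mB x2 y)
  | tsc c x1 => tsc c (tmulT mA mB x1 y)
  end.

Notation UU := (tensor Uvs Uvs).

Definition Delta_gen (g : Ugen) : UU :=
  match g with
  | gE i => tsum (tpure (K (alphaX i)) (E i))
                 (tpure (E i) (K (Xadd (alphaX i) (Xopp (gammaX i)))))
  | gK l => tpure (K l) (K l)
  end.

Fixpoint Delta (t : Uterm) : UU :=
  match t with
  | tgen g => Delta_gen g
  | tscal c => tsc c (tpure (tscal 1) (tscal 1))
  | tadd t1 t2 => tsum (Delta t1) (Delta t2)
  | tmul t1 t2 => tmulT (@tmul Ugen) (@tmul Ugen) (Delta t1) (Delta t2)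
  end.

Definition eps_gen (g : Ugen) : Qq :=
  match g with gE _ => 0 | gK _ => 1 end.

Fixpoint eps (t : Uterm) : Qq :=
  match t with
  | tgen g => eps_gen g
  | tscal c => c
  | tadd t1 t2 => eps t1 + eps t2
  | tmul t1 t2 => eps t1 * eps t2
  end.

Definition S_gen (g : Ugen) : Uterm :=
  match g with
  | gE i => tsmul (-1) (tmul (tmul (K (Xopp (alphaX i))) (E i))
                              (K (Xadd (gammaX i) (Xopp (alphaX i)))))
  | gK l => K (Xopp l)
  end.

Fixpoint antipode (t : Uterm) : Uterm :=
  match t with
  | tgen g => S_gen g
  | tscal c => tscal c
  | tadd t1 t2 => tadd (antipode t1) (antipode t2)
  | tmul t1 t2 => tmul (antipode t2) (antipode t1)
  end.

Definition Delta_id (x : UU) : tensor UU Uvs :=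
  tlift (C := tensor UU Uvs) (fun a b => tpure (Delta a) b) x.
Definition id_Delta (x : UU) : tensor Uvs UU :=
  tlift (C := tensor Uvs UU) (fun a b => tpure a (Delta b)) x.

Definition tassoc (x : tensor UU Uvs) : tensor Uvs UU :=
  tlift (C := tensor Uvs UU)
    (fun y c => tlift (C := tensor Uvs UU) (fun a b => tpure a (tpure b c)) y) x.

(* (eps (x) id) and (id (x) eps) followed by Q(q) (x) U = U = U (x) Q(q) *)
Definition eps_id (x : UU) : Uterm := tlift (C := Uvs) (fun a b => tsmul (eps a) b) x.
Definition id_eps (x : UU) : Uterm := tlift (C := Uvs) (fun a b => tsmul (eps b) a) x.

Definition m_S_id (x : UU) : Uterm := tlift (C := Uvs) (fun a b => tmul (antipode a) b) x.
Definition m_id_S (x : UU) : Uterm := tlift (C := Uvs) (fun a b => tmul a (antipode b)) x.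

Definition UUeq : UU -> UU -> Prop := @teq Uvs Uvs.
Definition UUUeq : tensor Uvs UU -> tensor Uvs UU -> Prop := @teq Uvs UU.

(* Delta, eps and S are defined on terms by structural recursion, so each is the
   evaluation of the free algebra in a target algebra (U (x) U, Q(q), and the opposite
   algebra of U^+ respectively); it descends to U^+ as soon as the target satisfies the
   algebra axioms and the images of the defining relations hold there.  For the
   relations involving K and for the far commutation of E_i, E_j this is bookkeeping
   of exponents <lambda, alpha_j^vee>, the key value being
   <alpha_i - gamma_i, alpha_j^vee> = b_ij for |i - j| > 1.  For the Serre relations,
   Delta (E_i) = x + y with x, y q-commuting with the summands of Delta (E_j), and the
   Serre element of x + y vanishes by six scalar identities in q.  The Hopf axioms are
   compatible with products, so by induction on terms they reduce to the generators. *)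

From mathcomp Require Import all_boot all_order all_algebra.
From mathcomp Require Import fraction.
From mathcomp Require Import ring zify.
From Stdlib Require Import Setoid Morphisms FunctionalExtensionality.
Set Implicit Arguments. Unset Strict Implicit. Unset Printing Implicit Defensive.
Import Order.TTheory GRing.Theory Num.Theory.
Local Open Scope ring_scope.

#[global] Hint Extern 0 (aeq _ _ _) => reflexivity : core.
#[global] Hint Extern 0 (teq _ _) => reflexivity : core.

Section TermAlgebra.
Context {G : Type} (R : term G -> term G -> Prop).
Local Notation "a ~ b" := (aeq R a b) (at level 70).
Implicit Types a b c : term G.

#[global] Instance aeq_Equivalence : Equivalence (aeq R).
Proof. split; [exact: aeq_refl | exact: aeq_sym | exact: aeq_trans]. Qed.
#[global] Instance tadd_Proper : Proper (aeq R ==> aeq R ==> aeq R) (@tadd G).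
Proof. by move=> ? ? ? ? ? ?; apply: aeq_add. Qed.
#[global] Instance tmul_Proper : Proper (aeq R ==> aeq R ==> aeq R) (@tmul G).
Proof. by move=> ? ? ? ? ? ?; apply: aeq_mul. Qed.
#[global] Instance tsmul_Proper k : Proper (aeq R ==> aeq R) (@tsmul G k).
Proof. by move=> ? ? h; rewrite /tsmul h. Qed.

Lemma taddr0 a : tadd a (tscal 0) ~ a.
Proof. by rewrite aeq_addC aeq_add0. Qed.
Lemma tscalM x y : tmul (tscal x) (tscal y) ~ (tscal (x * y) : term G).
Proof. by symmetry; apply: aeq_scalM. Qed.
Lemma tscalD x y : tadd (tscal x) (tscal y) ~ (tscal (x + y) : term G).
Proof. by symmetry; apply: aeq_scalD. Qed.

Lemma tsmul1 a : tsmul 1 a ~ a.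
Proof. exact: aeq_mul1l. Qed.
Lemma tsmulA x y a : tsmul x (tsmul y a) ~ tsmul (x * y) a.
Proof. by rewrite /tsmul aeq_mulA tscalM. Qed.
Lemma tsmulDl x y a : tadd (tsmul x a) (tsmul y a) ~ tsmul (x + y) a.
Proof. by rewrite /tsmul -aeq_mulDl tscalD. Qed.
Lemma tsmulDr x a b : tsmul x (tadd a b) ~ tadd (tsmul x a) (tsmul x b).
Proof. exact: aeq_mulDr. Qed.
Lemma tmul_smull x a b : tmul (tsmul x a) b ~ tsmul x (tmul a b).
Proof. by rewrite /tsmul aeq_mulA. Qed.
Lemma tmul_smulr x a b : tmul a (tsmul x b) ~ tsmul x (tmul a b).
Proof. by rewrite /tsmul aeq_mulA -aeq_scalC -aeq_mulA. Qed.
Lemma tsmul_scal x y : tsmul x (tscal y) ~ (tscal (x * y) : term G).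
Proof. exact: tscalM. Qed.
Lemma tmul_scalr x a : tmul a (tscal x) ~ tsmul x a.
Proof. by rewrite -aeq_scalC. Qed.

Lemma tsmul0 a : tsmul 0 a ~ tscal 0.
Proof.
have a2 : tadd (tsmul 0 a) (tsmul 0 a) ~ tsmul 0 a by rewrite tsmulDl addr0.
have : tadd (tadd (tsmul 0 a) (tsmul 0 a)) (tsmul (-1) (tsmul 0 a)) ~ tscal 0.
  by rewrite a2; apply: aeq_addN.
by rewrite -aeq_addA aeq_addN taddr0.
Qed.
Lemma tsmul_scal0 x : tsmul x (tscal 0) ~ (tscal 0 : term G).
Proof. by rewrite tsmul_scal mulr0. Qed.
Lemma tmul0l a : tmul (tscal 0) a ~ tscal 0.
Proof. exact: tsmul0. Qed.
Lemma tmul0r a : tmul a (tscal 0) ~ tscal 0.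
Proof. by rewrite tmul_scalr tsmul0. Qed.

Lemma taddACA a b c d : tadd (tadd a b) (tadd c d) ~ tadd (tadd a c) (tadd b d).
Proof. by rewrite -!aeq_addA (aeq_addA _ b c) (aeq_addC _ b c) -aeq_addA. Qed.

End TermAlgebra.

Section AlgebraModel.
Variables (A : Type) (eqv : A -> A -> Prop) (add mul : A -> A -> A) (sc : Qq -> A).
Local Notation "a ~ b" := (eqv a b) (at level 70).

(* The axioms imposed by [aeq], read in [A]; [sc c] plays the role of [tscal c]. *)
Record is_alg_model : Prop := {
  alg_equiv : Equivalence eqv;
  alg_addP : Proper (eqv ==> eqv ==> eqv) add;
  alg_mulP : Proper (eqv ==> eqv ==> eqv) mul;
  alg_addA a b c : add a (add b c) ~ add (add a b) c;
  alg_addC a b : add a b ~ add b a;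
  alg_add0 a : add (sc 0) a ~ a;
  alg_addN a : add a (mul (sc (-1)) a) ~ sc 0;
  alg_mulA a b c : mul a (mul b c) ~ mul (mul a b) c;
  alg_mul1l a : mul (sc 1) a ~ a;
  alg_mul1r a : mul a (sc 1) ~ a;
  alg_mulDl a b c : mul (add a b) c ~ add (mul a c) (mul b c);
  alg_mulDr a b c : mul c (add a b) ~ add (mul c a) (mul c b);
  alg_scD x y : sc (x + y) ~ add (sc x) (sc y);
  alg_scM x y : sc (x * y) ~ mul (sc x) (sc y);
  alg_scC x a : mul (sc x) a ~ mul a (sc x) }.

Fixpoint eval (G : Type) (f : G -> A) (t : term G) : A :=
  match t with
  | tgen g => f g
  | tscal c => sc c
  | tadd t1 t2 => add (eval f t1) (eval f t2)
  | tmul t1 t2 => mul (eval f t1) (eval f t2)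
  end.

Theorem eval_aeq G (R : term G -> term G -> Prop) (f : G -> A) :
  is_alg_model -> (forall t s, R t s -> eval f t ~ eval f s) ->
  forall t s, aeq R t s -> eval f t ~ eval f s.
Proof.
move=> M HR t s.
have Heq := alg_equiv M; have Hadd := alg_addP M; have Hmul := alg_mulP M.
elim=> /=.
- exact: HR.
- by reflexivity.
- by move=> ? ? _; symmetry.
- by move=> ? ? ? _ h1 _ h2; rewrite h1 h2; reflexivity.
- by move=> ? ? ? ? _ h1 _ h2; rewrite h1 h2; reflexivity.
- by move=> ? ? ? ? _ h1 _ h2; rewrite h1 h2; reflexivity.
- by move=> *; apply: (alg_addA M).
- by move=> *; apply: (alg_addC M).
- by move=> *; apply: (alg_add0 M).
- by move=> *; apply: (alg_addN M).
- by move=> *; apply: (alg_mulA M).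
- by move=> *; apply: (alg_mul1l M).
- by move=> *; apply: (alg_mul1r M).
- by move=> *; apply: (alg_mulDl M).
- by move=> *; apply: (alg_mulDr M).
- by move=> *; apply: (alg_scD M).
- by move=> *; apply: (alg_scM M).
- by move=> *; apply: (alg_scC M).
Qed.

End AlgebraModel.

Lemma Qq_alg_model : is_alg_model (@eq Qq) +%R *%R id.
Proof.
split=> //=; try by move=> *; ring.
- exact: eq_equivalence.
- by move=> ? ? -> ? ? ->.
- by move=> ? ? -> ? ? ->.
Qed.

Lemma term_op_alg_model G (R : term G -> term G -> Prop) :
  is_alg_model (aeq R) (@tadd G) (fun a b => tmul b a) tscal.
Proof.
split=> //=.
- exact: aeq_Equivalence.
- exact: tadd_Proper.
- by move=> ? ? h1 ? ? h2; rewrite h1 h2.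
- exact: aeq_addA.
- exact: aeq_addC.
- exact: aeq_add0.
- by move=> a; rewrite tmul_scalr; apply: aeq_addN.
- by move=> *; symmetry; apply: aeq_mulA.
- exact: aeq_mul1r.
- exact: aeq_mul1l.
- exact: aeq_mulDr.
- exact: aeq_mulDl.
- exact: aeq_scalD.
- by move=> x y; rewrite tscalM mulrC.
- by move=> *; symmetry; apply: aeq_scalC.
Qed.

Lemma msignE k : msign k = (-1) ^ k.
Proof. by rewrite expN1r. Qed.
Lemma msignD a b : msign (a + b) = msign a * msign b.
Proof. by rewrite !msignE exprzDr // unitrN1. Qed.
Lemma msignN k : msign (- k) = msign k.
Proof. by rewrite !msignE -exprz_inv invrN invr1. Qed.
Lemma msignS k : msign (k + 1) = - msign k.
Proof. by rewrite msignD mulrN1. Qed.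
Lemma msign_pm1 k : msign k = 1 \/ msign k = -1.
Proof. by rewrite /msign -signr_odd; case: odd; [right | left]. Qed.

Lemma ltr_pm1 s (a b : int) : s = 1 \/ s = -1 ->
  (s * a < s * b) = (if s == 1 then a < b else b < a).
Proof. by case=> ->; rewrite ?mul1r ?mulN1r ?ltrN2. Qed.

Lemma bijN i j : (1 < `|i - j|)%N -> bij j i = - bij i j.
Proof.
move=> h; rewrite /bij.
have -> : (i == j) || (i == j + 1) = false by apply/negbTE; lia.
have -> : (j == i) || (j == i + 1) = false by apply/negbTE; lia.
rewrite -opprB msignN /sgz oppr_eq0 oppr_lt0.
case: ifP => _ /=; first by rewrite !mulr0 mul0r oppr0.
rewrite lt_neqAle eq_sym.
by case: ifP => h1; case: ifP => h2 /=; first [lia | ring].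
Qed.

Lemma pair_corootD l m i : pair_coroot (Xadd l m) i = pair_coroot l i + pair_coroot m i.
Proof. rewrite /pair_coroot /Xadd; lia. Qed.
Lemma pair_corootN l i : pair_coroot (Xopp l) i = - pair_coroot l i.
Proof. rewrite /pair_coroot /Xopp; lia. Qed.

Lemma pair_coroot_alpha i j : pair_coroot (alphaX i) j =
  if j == i then 2 else if (j == i + 1) || (j == i - 1) then -1 else 0.
Proof. by rewrite /pair_coroot /alphaX /Xadd /Xopp /epsX; repeat (case: ifP => ? /=); lia. Qed.

Lemma pair_coroot_beta n j : pair_coroot (betaX n) j =
  if j == n - 1 then -2 else if j == n then -2 else if j == n - 2 then 4
  else bij (n - 1) j.
Proof.
rewrite /pair_coroot /betaX /bij !(ltr_pm1 _ _ (msign_pm1 _)).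
have -> : j - (n - 1) = (j - n) + 1 by lia.
have -> : j = (j - n) + n by lia.
move: (j - n) => m; rewrite !addrK !msignS !msignD /sgz.
have [->|?] := eqVneq m (-1).
  by case: (msign_pm1 n) => -> /=; repeat (case: ifP => ? /=); lia.
have [->|?] := eqVneq m 0.
  by case: (msign_pm1 n) => -> /=; repeat (case: ifP => ? /=); lia.
have [->|?] := eqVneq m (-2).
  by case: (msign_pm1 n) => -> /=; repeat (case: ifP => ? /=); lia.
by case: (msign_pm1 n) => ->; case: (msign_pm1 m) => -> /=; repeat (case: ifP => ? /=); lia.
Qed.

(* [muX i] is the weight of the second tensor factor of [Delta (E i)]. *)
Definition muX i := Xadd (alphaX i) (Xopp (gammaX i)).

Lemma pair_coroot_mu i j : pair_coroot (muX i) j =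
  if j == i then 0 else if j == i + 1 then -3 else if j == i - 1 then 3
  else bij i j.
Proof.
rewrite /muX pair_corootD /gammaX !pair_corootN opprK pair_coroot_alpha pair_coroot_beta.
have -> : i + 1 - 1 = i by lia.
by repeat (case: ifP => ? /=); lia.
Qed.

Lemma XaddC l m : Xadd l m = Xadd m l.
Proof. by apply: functional_extensionality => j; rewrite /Xadd addrC. Qed.
Lemma XaddAC l m n : Xadd (Xadd l m) n = Xadd (Xadd l n) m.
Proof. by apply: functional_extensionality => j; rewrite /Xadd addrAC. Qed.
Lemma XaddN l : Xadd l (Xopp l) = Xzero.
Proof. by apply: functional_extensionality => j; rewrite /Xadd /Xopp subrr. Qed.
Lemma XoppD l m : Xopp (Xadd l m) = Xadd (Xopp l) (Xopp m).
Proof. by apply: functional_extensionality => j; rewrite /Xadd /Xopp opprD. Qed.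
Lemma XoppK l : Xopp (Xopp l) = l.
Proof. by apply: functional_extensionality => j; rewrite /Xopp opprK. Qed.
Lemma Xopp0 : Xopp Xzero = Xzero.
Proof. by apply: functional_extensionality => j; rewrite /Xopp oppr0. Qed.

Lemma q_neq0 : q != 0.
Proof. by rewrite /q tofrac_eq0 polyX_eq0. Qed.
Lemma qzD (a b : int) : q ^ (a + b) = q ^ a * q ^ b.
Proof. by rewrite expfzDr // q_neq0. Qed.
Lemma qzNK (a : int) : q ^ (- a) * q ^ a = 1.
Proof. by rewrite -qzD addNr. Qed.

Section UPlus.
Local Notation "a ~ b" := (aeq Urel a b) (at level 70).

Lemma mulKK l m : tmul (K l) (K m) ~ K (Xadd l m).
Proof. by apply: aeq_rel; constructor. Qed.
Lemma mulKC l m : tmul (K l) (K m) ~ tmul (K m) (K l).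
Proof. by rewrite !mulKK XaddC. Qed.
Lemma K0 : K Xzero ~ tscal 1.
Proof. by apply: aeq_rel; constructor. Qed.
Lemma mulKKN l : tmul (K l) (K (Xopp l)) ~ tscal 1.
Proof. by rewrite mulKK XaddN K0. Qed.
Lemma mulKNK l : tmul (K (Xopp l)) (K l) ~ tscal 1.
Proof. by rewrite mulKC mulKKN. Qed.
Lemma mulKE l i : tmul (K l) (E i) ~ tsmul (q ^ pair_coroot l i) (tmul (E i) (K l)).
Proof. by apply: aeq_rel; constructor. Qed.
Lemma mulEK l i : tmul (E i) (K l) ~ tsmul (q ^ (- pair_coroot l i)) (tmul (K l) (E i)).
Proof. by rewrite mulKE tsmulA qzNK tsmul1. Qed.
Lemma mulEE i j : (1 < `|i - j|)%N ->
  tmul (E i) (E j) ~ tsmul (q ^ bij i j) (tmul (E j) (E i)).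
Proof. by move=> h; apply: aeq_rel; constructor. Qed.

End UPlus.

Section Tensor.
Context {V W : Svs}.
Local Notation "x ~ y" := (@teq V W x y) (at level 70).
Implicit Types x y z : tens V W.

#[global] Instance teq_Equivalence : Equivalence (@teq V W).
Proof. split; [exact: teq_refl | exact: teq_sym | exact: teq_trans]. Qed.
#[global] Instance tsum_Proper : Proper (@teq V W ==> @teq V W ==> @teq V W) (@tsum V W).
Proof. by move=> ? ? ? ? ? ?; apply: teq_sum. Qed.
#[global] Instance tsc_Proper c : Proper (@teq V W ==> @teq V W) (@tsc V W c).
Proof. by move=> ? ? ?; apply: teq_sc. Qed.

Lemma tsumr0 x : tsum x tzero ~ x.
Proof. by rewrite teq_sumC teq_sum0. Qed.
Lemma tscA a b x : tsc a (tsc b x) ~ tsc (a * b) x.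
Proof. by symmetry; apply: teq_scM. Qed.
Lemma tscC a b x : tsc a (tsc b x) ~ tsc b (tsc a x).
Proof. by rewrite !tscA mulrC. Qed.
Lemma tsc0 x : tsc 0 x ~ tzero.
Proof.
have x2 : tsum (tsc 0 x) (tsc 0 x) ~ tsc 0 x by rewrite -teq_scDl addr0.
have : tsum (tsum (tsc 0 x) (tsc 0 x)) (tsc (-1) (tsc 0 x)) ~ tzero.
  by rewrite x2; apply: teq_sumN.
by rewrite -teq_sumA teq_sumN tsumr0.
Qed.
Lemma tsc_zero a : tsc a tzero ~ (tzero : tens V W).
Proof. by rewrite -(tsc0 tzero) tscA mulr0. Qed.
Lemma tsumACA x y z u : tsum (tsum x y) (tsum z u) ~ tsum (tsum x z) (tsum y u).
Proof. by rewrite -!teq_sumA (teq_sumA y z) (teq_sumC y z) -teq_sumA. Qed.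

End Tensor.

Record is_setoid_alg (V : Svs) (m : V -> V -> V) : Prop := {
  salg_refl (v : V) : veq v v;
  salg_mulP (a a' b b' : V) : veq a a' -> veq b b' -> veq (m a b) (m a' b');
  salg_mulDl (a b c : V) : veq (m (vadd a b) c) (vadd (m a c) (m b c));
  salg_mulDr (a b c : V) : veq (m c (vadd a b)) (vadd (m c a) (m c b));
  salg_mulZl k (a c : V) : veq (m (vscale k a) c) (vscale k (m a c));
  salg_mulZr k (a c : V) : veq (m c (vscale k a)) (vscale k (m c a));
  salg_mulA (a b c : V) : veq (m a (m b c)) (m (m a b) c) }.

Section TensorMul.
Variables (V W : Svs) (mV : V -> V -> V) (mW : W -> W -> W).
Hypotheses (hV : is_setoid_alg mV) (hW : is_setoid_alg mW).
Local Notation "x ~ y" := (@teq V W x y) (at level 70).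
Local Notation P := (tmulP mV mW).
Local Notation T := (tmulT mV mW).
Implicit Types x y z : tens V W.

Lemma tmulPr a b y y' : y ~ y' -> P a b y ~ P a b y'.
Proof.
have [rV pV _ _ _ _ _] := hV; have [rW pW _ _ _ _ _] := hW.
elim=> /=.
- by [].
- by move=> ? ? _ ?; symmetry.
- by move=> ? ? ? _ h1 _ h2; rewrite h1 h2.
- by move=> ? ? ? ? _ h1 _ h2; rewrite h1 h2.
- by move=> ? ? ? _ h; rewrite h.
- by move=> *; apply: teq_sumA.
- by move=> *; apply: teq_sumC.
- by move=> *; apply: teq_sum0.
- by move=> *; apply: teq_sumN.
- by move=> *; apply: teq_sc1.
- by move=> *; apply: teq_scM.
- by move=> *; apply: teq_scDl.
- by move=> *; apply: teq_scDr.
- by move=> *; apply: teq_pure; auto.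
- by move=> *; apply: teq_trans (teq_addl _ _ _); apply: teq_pure; [apply: (salg_mulDr hV) | auto].
- by move=> *; apply: teq_trans (teq_addr _ _ _); apply: teq_pure; [auto | apply: (salg_mulDr hW)].
- by move=> *; apply: teq_trans (teq_scl _ _ _); apply: teq_pure; [apply: (salg_mulZr hV) | auto].
- by move=> *; apply: teq_trans (teq_scr _ _ _); apply: teq_pure; [auto | apply: (salg_mulZr hW)].
Qed.

Lemma tmulPl a a' b b' y : veq a a' -> veq b b' -> P a b y ~ P a' b' y.
Proof.
move=> ha hb; elim: y => [v w||y1 IH1 y2 IH2|c y IH] /=.
- by apply: teq_pure; [apply: (salg_mulP hV ha) | apply: (salg_mulP hW hb)];
    [apply: (salg_refl hV) | apply: (salg_refl hW)].
- by [].
- by rewrite IH1 IH2.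
- by rewrite IH.
Qed.

Lemma tmulPDl v v' w y : P (vadd v v') w y ~ tsum (P v w y) (P v' w y).
Proof.
elim: y => [a b||y1 IH1 y2 IH2|c y IH] /=.
- apply: teq_trans (teq_addl _ _ _); apply: teq_pure; [apply: (salg_mulDl hV) | apply: (salg_refl hW)].
- by rewrite teq_sum0.
- by rewrite IH1 IH2 tsumACA.
- by rewrite IH teq_scDr.
Qed.
Lemma tmulPDr v w w' y : P v (vadd w w') y ~ tsum (P v w y) (P v w' y).
Proof.
elim: y => [a b||y1 IH1 y2 IH2|c y IH] /=.
- apply: teq_trans (teq_addr _ _ _); apply: teq_pure; [apply: (salg_refl hV) | apply: (salg_mulDl hW)].
- by rewrite teq_sum0.
- by rewrite IH1 IH2 tsumACA.
- by rewrite IH teq_scDr.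
Qed.
Lemma tmulPZl k v w y : P (vscale k v) w y ~ tsc k (P v w y).
Proof.
elim: y => [a b||y1 IH1 y2 IH2|c y IH] /=.
- apply: teq_trans (teq_scl _ _ _); apply: teq_pure; [apply: (salg_mulZl hV) | apply: (salg_refl hW)].
- by rewrite tsc_zero.
- by rewrite IH1 IH2 teq_scDr.
- by rewrite IH tscC.
Qed.
Lemma tmulPZr k v w y : P v (vscale k w) y ~ tsc k (P v w y).
Proof.
elim: y => [a b||y1 IH1 y2 IH2|c y IH] /=.
- apply: teq_trans (teq_scr _ _ _); apply: teq_pure; [apply: (salg_refl hV) | apply: (salg_mulZl hW)].
- by rewrite tsc_zero.
- by rewrite IH1 IH2 teq_scDr.
- by rewrite IH tscC.
Qed.

Lemma tmulTl x x' y : x ~ x' -> T x y ~ T x' y.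
Proof.
elim=> /=.
- by [].
- by move=> ? ? _ ?; symmetry.
- by move=> ? ? ? _ h1 _ h2; rewrite h1 h2.
- by move=> ? ? ? ? _ h1 _ h2; rewrite h1 h2.
- by move=> ? ? ? _ h; rewrite h.
- by move=> *; apply: teq_sumA.
- by move=> *; apply: teq_sumC.
- by move=> *; apply: teq_sum0.
- by move=> *; apply: teq_sumN.
- by move=> *; apply: teq_sc1.
- by move=> *; apply: teq_scM.
- by move=> *; apply: teq_scDl.
- by move=> *; apply: teq_scDr.
- by move=> *; apply: tmulPl.
- by move=> *; apply: tmulPDl.
- by move=> *; apply: tmulPDr.
- by move=> *; apply: tmulPZl.
- by move=> *; apply: tmulPZr.
Qed.

Lemma tmulTr x y y' : y ~ y' -> T x y ~ T x y'.
Proof.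
move=> h; elim: x => [a b||x1 IH1 x2 IH2|c x IH] /=.
- exact: tmulPr.
- by [].
- by rewrite IH1 IH2.
- by rewrite IH.
Qed.

Lemma tmulT_Proper : Proper (@teq V W ==> @teq V W ==> @teq V W) T.
Proof. by move=> x x' hx y y' hy; apply: teq_trans (tmulTl _ hx) (tmulTr _ hy). Qed.

Lemma tmulTDr x y z : T x (tsum y z) ~ tsum (T x y) (T x z).
Proof.
elim: x => [a b||x1 IH1 x2 IH2|c x IH] /=.
- by [].
- by rewrite teq_sum0.
- by rewrite IH1 IH2 tsumACA.
- by rewrite IH teq_scDr.
Qed.
Lemma tmulTZr x k y : T x (tsc k y) ~ tsc k (T x y).
Proof.
elim: x => [a b||x1 IH1 x2 IH2|c x IH] /=.
- by [].
- by rewrite tsc_zero.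
- by rewrite IH1 IH2 teq_scDr.
- by rewrite IH tscC.
Qed.
Lemma tmulT0r x : T x tzero ~ tzero.
Proof.
elim: x => [a b||x1 IH1 x2 IH2|c x IH] /=.
- by [].
- by [].
- by rewrite IH1 IH2 teq_sum0.
- by rewrite IH tsc_zero.
Qed.

Lemma tmulTA x y z : T x (T y z) ~ T (T x y) z.
Proof.
have tmulPP a b c d z' : P a b (P c d z') ~ P (mV a c) (mW b d) z'.
  elim: z' => [u v||z1 IH1 z2 IH2|k z' IH] /=.
  - by apply: teq_pure; [apply: (salg_mulA hV) | apply: (salg_mulA hW)].
  - by [].
  - by rewrite IH1 IH2.
  - by rewrite IH.
elim: x => [a b||x1 IH1 x2 IH2|c x IH] /=; last 3 first.
- by [].
- by rewrite IH1 IH2.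
- by rewrite IH.
elim: y => [c d||y1 IH1 y2 IH2|k y IH] /=.
- exact: tmulPP.
- by [].
- by rewrite IH1 IH2.
- by rewrite IH.
Qed.

End TensorMul.

(* Lets unification recognise [Uterm] and [tens _ _] as carriers of setoid vector spaces. *)
Canonical Uvs.
Canonical tensor.
Local Notation TU := (tmulT (@tmul Ugen) (@tmul Ugen)).
Local Notation one := (tpure (tscal 1 : Uterm) (tscal 1 : Uterm) : UU).

Lemma Uvs_setoid_alg : is_setoid_alg (V := Uvs) (@tmul Ugen).
Proof.
split=> *; rewrite /=.
- exact: aeq_refl.
- exact: aeq_mul.
- exact: aeq_mulDl.
- exact: aeq_mulDr.
- exact: tmul_smull.
- exact: tmul_smulr.
- exact: aeq_mulA.
Qed.

#[global] Instance TU_Proper : Proper (@teq Uvs Uvs ==> @teq Uvs Uvs ==> @teq Uvs Uvs) TU.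
Proof. exact: tmulT_Proper Uvs_setoid_alg Uvs_setoid_alg. Qed.
#[global] Instance tpure_Proper : Proper (aeq Urel ==> aeq Urel ==> @teq Uvs Uvs) (@tpure Uvs Uvs).
Proof. by move=> ? ? ? ? ? ?; apply: teq_pure. Qed.

Section UPlusTensor.
Local Notation "x ~ y" := (@teq Uvs Uvs x y) (at level 70).

Lemma tmulP_one (x : UU) : tmulP (@tmul Ugen) (@tmul Ugen) (tscal 1) (tscal 1) x ~ x.
Proof.
elim: x => [a b||x1 IH1 x2 IH2|c x IH] /=.
- by rewrite !aeq_mul1l.
- by [].
- by rewrite IH1 IH2.
- by rewrite IH.
Qed.
Lemma tmulT_one (x : UU) : TU x one ~ x.
Proof.
elim: x => [a b||x1 IH1 x2 IH2|c x IH] /=.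
- by rewrite !aeq_mul1r.
- by [].
- by rewrite IH1 IH2.
- by rewrite IH.
Qed.

Lemma UU_alg_model : is_alg_model (@teq Uvs Uvs) (@tsum Uvs Uvs) TU (fun c => tsc c one).
Proof.
have hU := Uvs_setoid_alg.
split=> /=.
- exact: teq_Equivalence.
- exact: tsum_Proper.
- exact: TU_Proper.
- by move=> *; apply: teq_sumA.
- by move=> *; apply: teq_sumC.
- by move=> x /=; rewrite tsc0 teq_sum0.
- by move=> x /=; rewrite tmulP_one tsc0; apply: teq_sumN.
- by move=> *; apply: tmulTA.
- by move=> x /=; rewrite tmulP_one teq_sc1.
- by move=> x /=; rewrite tmulTZr tmulT_one teq_sc1.
- by [].
- by move=> *; apply: tmulTDr.
- by move=> *; apply: teq_scDl.
- by move=> x y /=; rewrite !aeq_mul1l tscA.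
- by move=> c x /=; rewrite tmulP_one tmulTZr tmulT_one.
Qed.

Lemma Delta_eval t : Delta t = eval (@tsum Uvs Uvs) TU (fun c => tsc c one) Delta_gen t.
Proof. by elim: t => //= a -> b ->. Qed.

End UPlusTensor.

Definition serre {G} (c1 c2 c3 : Qq) (u v f : term G) : term G :=
  tadd (tadd (tsmul c1 (tmul (tmul u v) f)) (tsmul c2 (tmul (tmul u f) v)))
       (tsmul c3 (tmul (tmul f u) v)).

Section SerreOfSum.
Context {G : Type} (R : term G -> term G -> Prop).
Local Notation "a ~ b" := (aeq R a b) (at level 70).
Variables (c1 c2 c3 : Qq).
Local Notation S := (serre c1 c2 c3).

Let tadd3ACA (A A' B B' C C' : term G) :
  tadd (tadd (tadd A A') (tadd B B')) (tadd C C') ~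
  tadd (tadd (tadd A B) C) (tadd (tadd A' B') C').
Proof. by rewrite (taddACA R A A' B B') (taddACA R (tadd A B) (tadd A' B') C C'). Qed.

Lemma serreDl u u' v f : S (tadd u u') v f ~ tadd (S u v f) (S u' v f).
Proof. by rewrite /serre !(aeq_mulDl, aeq_mulDr) !tsmulDr tadd3ACA. Qed.
Lemma serreDm u v v' f : S u (tadd v v') f ~ tadd (S u v f) (S u v' f).
Proof. by rewrite /serre !(aeq_mulDl, aeq_mulDr) !tsmulDr tadd3ACA. Qed.
Lemma serreDr u v f f' : S u v (tadd f f') ~ tadd (S u v f) (S u v f').
Proof. by rewrite /serre !(aeq_mulDl, aeq_mulDr) !tsmulDr tadd3ACA. Qed.

Let tsmul_eq0 k (a : term G) : k = 0 -> tsmul k a ~ tscal 0.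
Proof. by move=> ->; apply: tsmul0. Qed.

Let collect1 a1 a2 a3 a4 a5 a6 (A B : term G) :
  tadd (tadd (tadd (tsmul a1 A) (tsmul a2 A)) (tsmul a3 B))
       (tadd (tadd (tsmul a4 A) (tsmul a5 B)) (tsmul a6 B)) ~
  tadd (tsmul (a1 + a2 + a4) A) (tsmul (a3 + a5 + a6) B).
Proof.
rewrite (tsmulDl R a1 a2 A) -(aeq_addA _ (tsmul a4 A)) (tsmulDl R a5 a6 B) taddACA !tsmulDl.
by rewrite !addrA.
Qed.
Let collect2 a1 a2 a3 a4 a5 a6 (A B : term G) :
  tadd (tadd (tadd (tsmul a1 A) (tsmul a2 B)) (tsmul a3 B))
       (tadd (tadd (tsmul a4 A) (tsmul a5 A)) (tsmul a6 B)) ~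
  tadd (tsmul (a1 + (a4 + a5)) A) (tsmul (a2 + a3 + a6) B).
Proof.
by rewrite -(aeq_addA _ (tsmul a1 A)) (tsmulDl R a2 a3 B) (tsmulDl R a4 a5 A) taddACA !tsmulDl.
Qed.

Variables (x y z w : term G) (s1 s2 s3 : Qq).
Hypotheses (Hyx : tmul y x ~ tsmul s1 (tmul x y))
           (Hyz : tmul y z ~ tsmul s2 (tmul z y))
           (Hwx : tmul w x ~ tsmul s3 (tmul x w))
           (Hxxz : S x x z ~ tscal 0) (Hyyw : S y y w ~ tscal 0).
Hypotheses (P1 : c1 + c2 * s3 + c3 * (s3 * s3) = 0)
           (P2 : c1 * (s2 * s2) + c2 * s2 + c3 = 0)
           (P3 : c1 * s2 + c2 + c1 * (s1 * s2) = 0)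
           (P4 : c3 + c2 * (s1 * s2) + c3 * s1 = 0)
           (P5 : c1 + c1 * s1 + c2 * (s1 * s3) = 0)
           (P6 : c2 + c3 * s3 + c3 * (s1 * s3) = 0).

Lemma serre_xxw : S x x w ~ tscal 0.
Proof.
have e2 : tmul (tmul x w) x ~ tsmul s3 (tmul (tmul x x) w).
  by rewrite -aeq_mulA Hwx tmul_smulr aeq_mulA.
have e3 : tmul (tmul w x) x ~ tsmul (s3 * s3) (tmul (tmul x x) w).
  by rewrite Hwx tmul_smull e2 tsmulA.
rewrite /serre e2 e3 !tsmulA !tsmulDl; apply: tsmul_eq0; rewrite -P1; ring.
Qed.

Lemma serre_yyz : S y y z ~ tscal 0.
Proof.
have e2 : tmul (tmul y z) y ~ tsmul s2 (tmul (tmul z y) y).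
  by rewrite Hyz tmul_smull.
have e1 : tmul (tmul y y) z ~ tsmul (s2 * s2) (tmul (tmul z y) y).
  by rewrite -aeq_mulA Hyz tmul_smulr aeq_mulA e2 tsmulA.
rewrite /serre e2 e1 !tsmulA !tsmulDl; apply: tsmul_eq0; rewrite -P2; ring.
Qed.

Lemma serre_xyz : tadd (S x y z) (S y x z) ~ tscal 0.
Proof.
have e1 : tmul (tmul x y) z ~ tsmul s2 (tmul (tmul x z) y).
  by rewrite -aeq_mulA Hyz tmul_smulr aeq_mulA.
have e4 : tmul (tmul y x) z ~ tsmul (s1 * s2) (tmul (tmul x z) y).
  by rewrite Hyx tmul_smull e1 tsmulA.
have e5 : tmul (tmul y z) x ~ tsmul (s2 * s1) (tmul (tmul z x) y).
  by rewrite Hyz tmul_smull -aeq_mulA Hyx tmul_smulr aeq_mulA tsmulA.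
have e6 : tmul (tmul z y) x ~ tsmul s1 (tmul (tmul z x) y).
  by rewrite -aeq_mulA Hyx tmul_smulr aeq_mulA.
rewrite /serre e1 e4 e5 e6 !tsmulA -/(tsmul c2 (tmul (tmul x z) y)) collect1.
rewrite (_ : c1 * s2 + c2 + c1 * (s1 * s2) = 0) // (_ : c3 + c2 * (s2 * s1) + c3 * s1 = 0).
  by rewrite !tsmul0 aeq_add0.
by rewrite -P4; ring.
Qed.

Lemma serre_xyw : tadd (S x y w) (S y x w) ~ tscal 0.
Proof.
have e3 : tmul (tmul w x) y ~ tsmul s3 (tmul (tmul x w) y).
  by rewrite Hwx tmul_smull.
have e4 : tmul (tmul y x) w ~ tsmul s1 (tmul (tmul x y) w).
  by rewrite Hyx tmul_smull.
have e5 : tmul (tmul y w) x ~ tsmul (s3 * s1) (tmul (tmul x y) w).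
  by rewrite -aeq_mulA Hwx tmul_smulr aeq_mulA e4 tsmulA.
have e6 : tmul (tmul w y) x ~ tsmul (s1 * s3) (tmul (tmul x w) y).
  by rewrite -aeq_mulA Hyx tmul_smulr aeq_mulA e3 tsmulA.
rewrite /serre e3 e4 e5 e6 !tsmulA collect2.
rewrite (_ : c1 + (c1 * s1 + c2 * (s3 * s1)) = 0); last by rewrite -P5; ring.
by rewrite (_ : c2 + c3 * s3 + c3 * (s1 * s3) = 0) // !tsmul0 aeq_add0.
Qed.

(* The expansion of [S (x + y) (x + y) (z + w)] has eight terms; the six scalar
   identities make the four groups other than [S x x z] and [S y y w] vanish. *)
Lemma serre_add : S (tadd x y) (tadd x y) (tadd z w) ~ tscal 0.
Proof.
rewrite serreDl !serreDm !serreDr Hxxz Hyyw serre_xxw serre_yyz !aeq_add0 !taddr0.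
by rewrite taddACA serre_xyz serre_xyw aeq_add0.
Qed.

End SerreOfSum.

Section DeltaSerre.
Local Notation "x ~ y" := (@teq Uvs Uvs x y) (at level 70).
Local Notation "a ~~ b" := (aeq Urel a b) (at level 70).

Definition DeltaE1 i : UU := tpure (K (alphaX i)) (E i).
Definition DeltaE2 i : UU := tpure (E i) (K (muX i)).

Lemma DeltaE21C u v : TU (DeltaE2 u) (DeltaE1 v) ~
  tsc (q ^ (- pair_coroot (alphaX v) u + pair_coroot (muX u) v)) (TU (DeltaE1 v) (DeltaE2 u)).
Proof. by rewrite /DeltaE1 /DeltaE2 /= (mulEK (alphaX v) u) (mulKE (muX u) v) teq_scl teq_scr tscA -qzD. Qed.

Inductive gen4 := gx | gy | gz | gw.
Variables (c1 c2 c3 s1 s2 s3 : Qq) (i j : int).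
Local Notation x := (tgen gx). Local Notation y := (tgen gy).
Local Notation z := (tgen gz). Local Notation w := (tgen gw).

Inductive rel4 : term gen4 -> term gen4 -> Prop :=
  | rel4_yx : rel4 (tmul y x) (tsmul s1 (tmul x y))
  | rel4_yz : rel4 (tmul y z) (tsmul s2 (tmul z y))
  | rel4_wx : rel4 (tmul w x) (tsmul s3 (tmul x w))
  | rel4_xxz : rel4 (serre c1 c2 c3 x x z) (tscal 0)
  | rel4_yyw : rel4 (serre c1 c2 c3 y y w) (tscal 0).

Definition Delta4 (g : gen4) : UU :=
  match g with gx => DeltaE1 i | gy => DeltaE2 i | gz => DeltaE1 j | gw => DeltaE2 j end.

Hypotheses (Hserre : serre c1 c2 c3 (E i) (E i) (E j) ~~ tscal 0)
  (Hs1 : s1 = q ^ (- pair_coroot (alphaX i) i + pair_coroot (muX i) i))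
  (Hs2 : s2 = q ^ (- pair_coroot (alphaX j) i + pair_coroot (muX i) j))
  (Hs3 : s3 = q ^ (- pair_coroot (alphaX i) j + pair_coroot (muX j) i)).

Let KKK a b c : tmul (tmul (K a) (K b)) (K c) ~~ K (Xadd (Xadd a b) c).
Proof. by rewrite !mulKK. Qed.

Lemma Delta4_rel4 a b : rel4 a b ->
  eval (@tsum Uvs Uvs) TU (fun c => tsc c one) Delta4 a ~
  eval (@tsum Uvs Uvs) TU (fun c => tsc c one) Delta4 b.
Proof.
case=> /=.
- by rewrite !aeq_mul1l Hs1; apply: DeltaE21C.
- by rewrite !aeq_mul1l Hs2; apply: DeltaE21C.
- by rewrite !aeq_mul1l Hs3; apply: DeltaE21C.
- rewrite !aeq_mul1l !KKK (XaddC (alphaX j)) !(XaddAC (alphaX i) (alphaX j)).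
  rewrite tsc0 -!teq_scr -!teq_addr /= -/(serre c1 c2 c3 (E i) (E i) (E j)) Hserre.
  by rewrite -(tsmul_scal0 Urel 0) teq_scr tsc0.
- rewrite !aeq_mul1l !KKK (XaddC (muX j)) !(XaddAC (muX i) (muX j)).
  rewrite tsc0 -!teq_scl -!teq_addl /= -/(serre c1 c2 c3 (E i) (E i) (E j)) Hserre.
  by rewrite -(tsmul_scal0 Urel 0) teq_scl tsc0.
Qed.

Hypotheses (P1 : c1 + c2 * s3 + c3 * (s3 * s3) = 0)
           (P2 : c1 * (s2 * s2) + c2 * s2 + c3 = 0)
           (P3 : c1 * s2 + c2 + c1 * (s1 * s2) = 0)
           (P4 : c3 + c2 * (s1 * s2) + c3 * s1 = 0)
           (P5 : c1 + c1 * s1 + c2 * (s1 * s3) = 0)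
           (P6 : c2 + c3 * s3 + c3 * (s1 * s3) = 0).

(* [Delta (E i)] is the image of [x + y] under [Delta4], so the Serre relation for
   it is transported from the free algebra with relations [rel4]. *)
Lemma Delta_serre : Delta (serre c1 c2 c3 (E i) (E i) (E j)) ~ Delta (tscal 0).
Proof.
rewrite !Delta_eval.
have gen : forall t s, rel4 t s -> aeq rel4 t s by move=> t s h; apply: aeq_rel.
exact: (eval_aeq UU_alg_model Delta4_rel4
  (serre_add (gen _ _ rel4_yx) (gen _ _ rel4_yz) (gen _ _ rel4_wx)
     (gen _ _ rel4_xxz) (gen _ _ rel4_yyw) P1 P2 P3 P4 P5 P6)).
Qed.

End DeltaSerre.

Ltac pair_coroot_arith :=
  rewrite ?pair_coroot_alpha ?pair_coroot_mu;
  repeat (case: ifP => ? /=); lia.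

Lemma serre_identities_up (F : fieldType) (x : F) : x != 0 ->
  let c1 := x ^+ 3 in let c2 := - (x + x^-1) in let c3 := (x ^+ 3)^-1 in
  let s1 := (x ^+ 2)^-1 in let s2 := (x ^+ 2)^-1 in let s3 := x ^+ 4 in
  [/\ c1 + c2 * s3 + c3 * (s3 * s3) = 0, c1 * (s2 * s2) + c2 * s2 + c3 = 0
    & c1 * s2 + c2 + c1 * (s1 * s2) = 0] /\
  [/\ c3 + c2 * (s1 * s2) + c3 * s1 = 0, c1 + c1 * s1 + c2 * (s1 * s3) = 0
    & c2 + c3 * s3 + c3 * (s1 * s3) = 0].
Proof. by move=> x0 /=; do 2!split; field. Qed.

Lemma serre_identities_down (F : fieldType) (x : F) : x != 0 ->
  let c1 := (x ^+ 3)^-1 in let c2 := - (x + x^-1) in let c3 := x ^+ 3 in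
  let s1 := (x ^+ 2)^-1 in let s2 := x ^+ 4 in let s3 := (x ^+ 2)^-1 in
  [/\ c1 + c2 * s3 + c3 * (s3 * s3) = 0, c1 * (s2 * s2) + c2 * s2 + c3 = 0
    & c1 * s2 + c2 + c1 * (s1 * s2) = 0] /\
  [/\ c3 + c2 * (s1 * s2) + c3 * s1 = 0, c1 + c1 * s1 + c2 * (s1 * s3) = 0
    & c2 + c3 * s3 + c3 * (s1 * s3) = 0].
Proof. by move=> x0 /=; do 2!split; field. Qed.

Lemma qz_expr (n : nat) : q ^ (n : int) = q ^+ n. Proof. by []. Qed.
Lemma qz_exprN (n : nat) : q ^ (- (n : int)) = (q ^+ n)^-1. Proof. by rewrite -exprnN. Qed.

Section DeltaRelations.
Local Notation "x ~ y" := (@teq Uvs Uvs x y) (at level 70).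

Lemma Delta_serre_up i :
  Delta (serre (q ^ 3) (- q2) (q ^ (-3)) (E i) (E i) (E (i + 1))) ~ Delta (tscal 0).
Proof.
have [[P1 P2 P3] [P4 P5 P6]] := serre_identities_up q_neq0.
rewrite -(qz_expr 3) -(qz_exprN 3) -(qz_exprN 2) -(qz_expr 4) in P1 P2 P3 P4 P5 P6.
apply: (Delta_serre _ _ _ _ P1 P2 P3 P4 P5 P6).
- by apply: aeq_rel; apply: Urel_Serre1.
- by congr (q ^ _); pair_coroot_arith.
- by congr (q ^ _); pair_coroot_arith.
- by congr (q ^ _); pair_coroot_arith.
Qed.

Lemma Delta_serre_down i :
  Delta (serre (q ^ (-3)) (- q2) (q ^ 3) (E i) (E i) (E (i - 1))) ~ Delta (tscal 0).
Proof.
have [[P1 P2 P3] [P4 P5 P6]] := serre_identities_down q_neq0.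
rewrite -(qz_expr 3) -(qz_exprN 3) -(qz_exprN 2) -(qz_expr 4) in P1 P2 P3 P4 P5 P6.
apply: (Delta_serre _ _ _ _ P1 P2 P3 P4 P5 P6).
- by apply: aeq_rel; apply: Urel_Serre2.
- by congr (q ^ _); pair_coroot_arith.
- by congr (q ^ _); pair_coroot_arith.
- by congr (q ^ _); pair_coroot_arith.
Qed.

Lemma Delta_EE i j : (1 < `|i - j|)%N ->
  Delta (tmul (E i) (E j)) ~ Delta (tsmul (q ^ bij i j) (tmul (E j) (E i))).
Proof.
move=> h; rewrite /= !aeq_mul1l (mulKC (alphaX i)) (mulKC (muX i)) (mulEE h).
rewrite (mulKE (alphaX i) j) (mulEK (muX j) i) (mulEK (alphaX j) i) (mulKE (muX i) j).
rewrite !teq_scl !teq_scr !tscA -!qzD.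
rewrite (_ : pair_coroot (alphaX i) j + - pair_coroot (muX j) i = bij i j); last first.
  rewrite pair_coroot_alpha pair_coroot_mu; repeat (case: ifP => ? /=); try lia.
  by rewrite (bijN h) sub0r opprK.
rewrite (_ : - pair_coroot (alphaX j) i + pair_coroot (muX i) j = bij i j); last first.
  by pair_coroot_arith.
by rewrite !teq_scDr tsumACA.
Qed.

Lemma Delta_rel a b : Urel a b -> Delta a ~ Delta b.
Proof.
case.
- by move=> l m /=; rewrite mulKK.
- by rewrite /= teq_sc1 K0.
- move=> l i /=; rewrite !aeq_mul1l (mulKC l (alphaX i)) (mulKC l (muX i)) (mulKE l i).
  by rewrite teq_scl teq_scr teq_scDr.
- exact: Delta_EE.
- exact: Delta_serre_up.
- exact: Delta_serre_down.
Qed.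

End DeltaRelations.

Theorem Delta_aeq t s : Ueq t s -> UUeq (Delta t) (Delta s).
Proof.
move=> h; rewrite !Delta_eval; apply: (eval_aeq UU_alg_model _ h) => a b hab.
by rewrite -!Delta_eval; apply: Delta_rel.
Qed.

Lemma eps_eval t : eps t = eval +%R *%R id eps_gen t.
Proof. by elim: t => //= a -> b ->. Qed.

Lemma eps_rel a b : Urel a b -> eps a = eps b.
Proof. by case=> * /=; rewrite ?(mul0r, mulr0, mul1r, mulr1, addr0, add0r). Qed.

Theorem eps_aeq t s : Ueq t s -> eps t = eps s.
Proof.
move=> h; rewrite !eps_eval; apply: (eval_aeq Qq_alg_model _ h) => a b hab.
by rewrite -!eps_eval; apply: eps_rel.
Qed.

Definition nuX i := Xadd (gammaX i) (Xopp (alphaX i)).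
Definition rhoX i := Xadd (Xopp (alphaX i)) (nuX i).
Definition antipode_coef i : Qq := - q ^ (- pair_coroot (nuX i) i).

Lemma nuX_muX i : Xadd (nuX i) (muX i) = Xzero.
Proof. by apply: functional_extensionality => k; rewrite /nuX /muX /Xadd /Xopp /Xzero; ring. Qed.
Lemma Xopp_muX i : Xopp (muX i) = nuX i.
Proof. by rewrite /muX XoppD XoppK XaddC. Qed.

Lemma pair_coroot_rho i j :
  pair_coroot (rhoX i) j = - pair_coroot (muX i) j - pair_coroot (alphaX i) j.
Proof. by rewrite /rhoX /nuX /muX; move: (alphaX i) (gammaX i) => a g; rewrite !pair_corootD !pair_corootN; lia. Qed.

Lemma antipodeD a b : antipode (tadd a b) = tadd (antipode a) (antipode b). Proof. by []. Qed.
Lemma antipodeM a b : antipode (tmul a b) = tmul (antipode b) (antipode a). Proof. by []. Qed.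
Lemma antipodeZ c a : antipode (tsmul c a) = tmul (antipode a) (tscal c). Proof. by []. Qed.
Lemma antipodeK l : antipode (K l) = K (Xopp l). Proof. by []. Qed.

Section Antipode.
Local Notation "a ~ b" := (aeq Urel a b) (at level 70).

Lemma antipodeE i : antipode (E i) ~ tsmul (antipode_coef i) (tmul (K (rhoX i)) (E i)).
Proof. by rewrite /= -aeq_mulA (mulEK (nuX i)) tmul_smulr aeq_mulA mulKK tsmulA mulN1r. Qed.

Lemma mulKEK l i m (w : Uterm) :
  tmul (tmul (K l) (E i)) (tmul (K m) w) ~
  tsmul (q ^ (- pair_coroot m i)) (tmul (K (Xadd l m)) (tmul (E i) w)).
Proof.
rewrite -(aeq_mulA _ (K l)) (aeq_mulA _ (E i) (K m) w) (mulEK m i) tmul_smull tmul_smulr.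
by rewrite -(aeq_mulA _ (K m)) (aeq_mulA _ (K l)) mulKK.
Qed.

Lemma antipode_KE l i :
  antipode (tmul (K l) (E i)) ~ antipode (tsmul (q ^ pair_coroot l i) (tmul (E i) (K l))).
Proof.
rewrite antipodeZ !antipodeM !antipodeK !antipodeE tmul_smull tmul_smulr tmul_scalr.
rewrite -(aeq_mulA _ (K (rhoX i))) (mulEK (Xopp l) i) tmul_smulr aeq_mulA.
rewrite aeq_mulA (mulKC (Xopp l)) !tsmulA pair_corootN opprK.
by rewrite mulrC.
Qed.

Lemma antipode_EE i j : (1 < `|i - j|)%N ->
  antipode (tmul (E i) (E j)) ~ antipode (tsmul (q ^ bij i j) (tmul (E j) (E i))).
Proof.
move=> h; rewrite antipodeZ !antipodeM !antipodeE !tmul_smull !tmul_smulr tmul_scalr !mulKEK (mulEE h).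
rewrite tmul_smulr !tsmulA (XaddC (rhoX i)).
have -> : - pair_coroot (rhoX i) j = bij i j by rewrite pair_coroot_rho; pair_coroot_arith.
have -> : - pair_coroot (rhoX j) i = - bij i j.
  rewrite pair_coroot_rho pair_coroot_alpha pair_coroot_mu.
  by repeat (case: ifP => ? /=); try lia; rewrite (bijN h); lia.
set ci := antipode_coef i; set cj := antipode_coef j.
have -> : ci * q ^ bij i j * cj * q ^ (- bij i j) * q ^ bij i j = cj * ci * q ^ bij i j.
  by rewrite -(mulrA _ (q ^ (- _))) qzNK mulr1; ring.
by [].
Qed.

Let collect_K k1 k2 k3 k c1 c2 c3 l1 l2 l3 (a b d : Uterm) :
  k1 = k * c3 -> k2 = k * c2 -> k3 = k * c1 -> l1 = l2 -> l3 = l2 ->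
  tadd (tadd (tsmul k1 (tmul (K l1) a)) (tsmul k2 (tmul (K l2) b))) (tsmul k3 (tmul (K l3) d))
  ~ tsmul k (tmul (K l2) (tadd (tadd (tsmul c1 d) (tsmul c2 b)) (tsmul c3 a))).
Proof.
move=> -> -> -> -> ->; rewrite !aeq_mulDr !tmul_smulr !tsmulDr !tsmulA.
by rewrite (aeq_addC _ (tadd _ _)) (aeq_addC _ (tsmul (k * c3) _)) aeq_addA.
Qed.

(* Moving all Cartan factors of [S (E_u) S (E_v) S (E_w)] to the left turns [S] of a
   Serre element into a multiple of the Serre element, given two exponent identities. *)
Lemma antipode_serre c1 c2 c3 i j :
  let e1 := - pair_coroot (rhoX i) i + - pair_coroot (Xadd (rhoX i) (rhoX i)) j in
  let e2 := - pair_coroot (rhoX i) j + - pair_coroot (Xadd (rhoX j) (rhoX i)) i in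
  let e3 := - pair_coroot (rhoX j) i + - pair_coroot (Xadd (rhoX i) (rhoX j)) i in
  c1 * q ^ e1 = c3 * q ^ e2 -> c3 * q ^ e3 = c1 * q ^ e2 ->
  serre c1 c2 c3 (E i) (E i) (E j) ~ tscal 0 ->
  antipode (serre c1 c2 c3 (E i) (E i) (E j)) ~ tscal 0.
Proof.
move=> e1 e2 e3 H1 H3 Hserre.
rewrite /serre !antipodeD !antipodeZ !antipodeM !tmul_scalr !antipodeE.
rewrite !(tmul_smull, tmul_smulr) !mulKEK !(tmul_smull, tmul_smulr) !mulKEK !tsmulA.
set di := antipode_coef i; set dj := antipode_coef j.
rewrite (collect_K (c1 := c1) (c2 := c2) (c3 := c3)
  (k := di * dj * di * q ^ (- pair_coroot (rhoX i) j) *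
        q ^ (- pair_coroot (Xadd (rhoX j) (rhoX i)) i))).
- rewrite !aeq_mulA -/(serre c1 c2 c3 (E i) (E i) (E j)) Hserre tmul0r.
  exact: tsmul_scal0.
- transitivity (di * di * dj * (c1 * q ^ e1)); first by rewrite qzD; ring.
  by rewrite H1 qzD; ring.
- by ring.
- transitivity (di * di * dj * (c3 * q ^ e3)); first by rewrite qzD; ring.
  by rewrite H3 qzD; ring.
- by apply: functional_extensionality => k; rewrite /Xadd; ring.
- by apply: functional_extensionality => k; rewrite /Xadd; ring.
Qed.

Ltac rho_arith := rewrite ?(pair_corootD (rhoX _)) ?pair_coroot_rho; pair_coroot_arith.

Lemma antipode_rel a b : Urel a b -> antipode a ~ antipode b.
Proof.
case.
- by move=> l m; rewrite !antipodeM !antipodeK mulKK XaddC XoppD.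
- by rewrite antipodeK Xopp0 K0.
- exact: antipode_KE.
- exact: antipode_EE.
- move=> i; apply: antipode_serre; last by apply: aeq_rel; apply: Urel_Serre1.
  + by rewrite -!qzD; congr (q ^ _); rho_arith.
  + by rewrite -!qzD; congr (q ^ _); rho_arith.
- move=> i; apply: antipode_serre; last by apply: aeq_rel; apply: Urel_Serre2.
  + by rewrite -!qzD; congr (q ^ _); rho_arith.
  + by rewrite -!qzD; congr (q ^ _); rho_arith.
Qed.

End Antipode.

Lemma antipode_eval t : antipode t = eval (@tadd Ugen) (fun a b => tmul b a) tscal S_gen t.
Proof. by elim: t => //= a -> b ->. Qed.

Theorem antipode_aeq t s : Ueq t s -> Ueq (antipode t) (antipode s).
Proof.
move=> h; rewrite !antipode_eval; apply: (eval_aeq (term_op_alg_model Urel) _ h) => a b hab.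
by rewrite -!antipode_eval; apply: antipode_rel.
Qed.

Lemma UU_setoid_alg : is_setoid_alg (V := UU) TU.
Proof.
split=> *; rewrite /=.
- by [].
- exact: TU_Proper.
- by [].
- exact: tmulTDr.
- by [].
- exact: tmulTZr.
- exact: tmulTA Uvs_setoid_alg Uvs_setoid_alg _ _ _.
Qed.

Section Coassociativity.
Local Notation M3 := (tmulT (@tmul Ugen) TU).
Local Notation M3' := (tmulT TU (@tmul Ugen)).
Local Notation "x ~ y" := (@teq Uvs UU x y) (at level 70).

Lemma id_DeltaM (x y : UU) : id_Delta (TU x y) = M3 (id_Delta x) (id_Delta y).
Proof.
elim: x => [a b||x1 IH1 x2 IH2|c x IH] /=; last 3 first.
- by [].
- by rewrite /id_Delta /= -!/(id_Delta _) IH1 IH2.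
- by rewrite /id_Delta /= -!/(id_Delta _) IH.
elim: y => [c d||y1 IH1 y2 IH2|k y IH] /=.
- by [].
- by [].
- by rewrite /id_Delta /= -!/(id_Delta _) IH1 IH2.
- by rewrite /id_Delta /= -!/(id_Delta _) IH.
Qed.

Lemma Delta_idM (x y : UU) : Delta_id (TU x y) = M3' (Delta_id x) (Delta_id y).
Proof.
elim: x => [a b||x1 IH1 x2 IH2|c x IH] /=; last 3 first.
- by [].
- by rewrite /Delta_id /= -!/(Delta_id _) IH1 IH2.
- by rewrite /Delta_id /= -!/(Delta_id _) IH.
elim: y => [c d||y1 IH1 y2 IH2|k y IH] /=.
- by [].
- by [].
- by rewrite /Delta_id /= -!/(Delta_id _) IH1 IH2.
- by rewrite /Delta_id /= -!/(Delta_id _) IH.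
Qed.

Let assoc_pure (c : Uterm) a b : tensor Uvs UU := tpure a (tpure b c).

Let tlift_assoc_pureM (y y' : UU) c c' :
  tlift (assoc_pure (tmul c c')) (TU y y') =
  M3 (tlift (assoc_pure c) y) (tlift (assoc_pure c') y').
Proof.
elim: y => [a b||y1 IH1 y2 IH2|k y IH] /=; last 3 first.
- by [].
- by rewrite IH1 IH2.
- by rewrite IH.
elim: y' => [a' b'||y1 IH1 y2 IH2|k y IH] /=.
- by [].
- by [].
- by rewrite IH1 IH2.
- by rewrite IH.
Qed.

Lemma tassocM (x y : tensor UU Uvs) : tassoc (M3' x y) ~ M3 (tassoc x) (tassoc y).
Proof.
have hUU := UU_setoid_alg; have hU := Uvs_setoid_alg.
elim: x => [z c||x1 IH1 x2 IH2|k x IH]; last 3 first.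
- by [].
- by rewrite /tassoc /= -!/(tassoc _) IH1 IH2.
- by rewrite /tassoc /= -!/(tassoc _) IH.
elim: y => [z' c'||y1 IH1 y2 IH2|k y IH].
- change (tlift (assoc_pure (tmul c c')) (TU z z') ~
          M3 (tlift (assoc_pure c) z) (tlift (assoc_pure c') z')).
  by rewrite tlift_assoc_pureM.
- by rewrite /= tmulT0r.
- by rewrite /= /tassoc /= -!/(tassoc _) IH1 IH2 tmulTDr.
- by rewrite /= /tassoc /= -!/(tassoc _) IH tmulTZr.
Qed.

Theorem coassoc t : tassoc (Delta_id (Delta t)) ~ id_Delta (Delta t).
Proof.
have hUU := UU_setoid_alg; have hU := Uvs_setoid_alg.
elim: t => [[i|l]|c|a IHa b IHb|a IHa b IHb].
- by rewrite /id_Delta /Delta_id /tassoc /= teq_addr teq_sumA.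
- by [].
- by rewrite /id_Delta /tassoc /= teq_scr teq_sc1.
- exact: teq_sum IHa IHb.
- rewrite /= Delta_idM id_DeltaM tassocM.
  exact: teq_trans (tmulTl hU hUU _ IHa) (tmulTr hU hUU _ IHb).
Qed.

End Coassociativity.

Section CounitAntipode.
Local Notation "a ~ b" := (aeq Urel a b) (at level 70).
Local Notation tliftU := (tlift (C := Uvs)).
Implicit Types f g : Uterm -> Uterm -> Uterm.

Lemma tlift_ext f g (y : UU) : (forall c d, f c d ~ g c d) -> tliftU f y ~ tliftU g y.
Proof.
move=> h; elim: y => [c d||y1 IH1 y2 IH2|k y IH] /=.
- exact: h.
- by [].
- by rewrite IH1 IH2.
- by rewrite IH.
Qed.
Lemma tliftD f g (y : UU) :
  tliftU (fun c d => tadd (f c d) (g c d)) y ~ tadd (tliftU f y) (tliftU g y).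
Proof.
elim: y => [c d||y1 IH1 y2 IH2|k y IH] /=.
- by [].
- by rewrite aeq_add0.
- by rewrite IH1 IH2 taddACA.
- by rewrite IH tsmulDr.
Qed.
Lemma tliftZ f k (y : UU) : tliftU (fun c d => tsmul k (f c d)) y ~ tsmul k (tliftU f y).
Proof.
elim: y => [c d||y1 IH1 y2 IH2|k' y IH] /=.
- by [].
- by rewrite tsmul_scal0.
- by rewrite IH1 IH2 tsmulDr.
- by rewrite IH !tsmulA mulrC.
Qed.
Lemma tlift0 (y : UU) : tliftU (fun _ _ => tscal 0) y ~ tscal 0.
Proof.
elim: y => [c d||y1 IH1 y2 IH2|k y IH] /=.
- by [].
- by [].
- by rewrite IH1 IH2 aeq_add0.
- by rewrite IH tsmul_scal0.
Qed.

Lemma eps_idM (x y : UU) : eps_id (TU x y) ~ tmul (eps_id x) (eps_id y).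
Proof.
elim: x => [a b||x1 IH1 x2 IH2|k x IH]; last 3 first.
- by rewrite /eps_id /= tmul0l.
- by rewrite /eps_id /= -!/(eps_id _) IH1 IH2 aeq_mulDl.
- by rewrite /eps_id /= -!/(eps_id _) IH tmul_smull.
elim: y => [c d||y1 IH1 y2 IH2|k y IH].
- by rewrite /eps_id /= tmul_smull tmul_smulr tsmulA.
- by rewrite /eps_id /= tmul0r.
- by rewrite /eps_id /= -!/(eps_id _) IH1 IH2 aeq_mulDr.
- by rewrite /eps_id /= -!/(eps_id _) IH tmul_smulr.
Qed.
Lemma id_epsM (x y : UU) : id_eps (TU x y) ~ tmul (id_eps x) (id_eps y).
Proof.
elim: x => [a b||x1 IH1 x2 IH2|k x IH]; last 3 first.
- by rewrite /id_eps /= tmul0l.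
- by rewrite /id_eps /= -!/(id_eps _) IH1 IH2 aeq_mulDl.
- by rewrite /id_eps /= -!/(id_eps _) IH tmul_smull.
elim: y => [c d||y1 IH1 y2 IH2|k y IH].
- by rewrite /id_eps /= tmul_smull tmul_smulr tsmulA mulrC.
- by rewrite /id_eps /= tmul0r.
- by rewrite /id_eps /= -!/(id_eps _) IH1 IH2 aeq_mulDr.
- by rewrite /id_eps /= -!/(id_eps _) IH tmul_smulr.
Qed.

Theorem counit t : eps_id (Delta t) ~ t /\ id_eps (Delta t) ~ t.
Proof.
elim: t => [[i|l]|c|a [IHa IHa'] b [IHb IHb']|a [IHa IHa'] b [IHb IHb']].
- by rewrite /eps_id /id_eps /= !tsmul1 !tsmul0 taddr0 aeq_add0.
- by rewrite /eps_id /id_eps /= !tsmul1.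
- by rewrite /eps_id /id_eps /= !tsmul1 !tsmul_scal !mulr1.
- by rewrite /eps_id /id_eps /= -!/(eps_id _) -!/(id_eps _) IHa IHb IHa' IHb'.
- by rewrite /= eps_idM id_epsM IHa IHb IHa' IHb'.
Qed.

(* [m (S (x) id) (x y) = sum S(y_1) (m (S (x) id) x) y_2], and symmetrically for [m (id (x) S)]. *)
Definition sandwich_l (u : Uterm) : Uterm -> Uterm -> Uterm :=
  fun c d => tmul (tmul (antipode c) u) d.
Definition sandwich_r (u : Uterm) : Uterm -> Uterm -> Uterm :=
  fun a b => tmul (tmul a u) (antipode b).

Lemma sandwich_l_aeq u u' (y : UU) :
  u ~ u' -> tliftU (sandwich_l u) y ~ tliftU (sandwich_l u') y.
Proof. by move=> h; apply: tlift_ext => c d; rewrite /sandwich_l h. Qed.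
Lemma sandwich_r_aeq u u' (x : UU) :
  u ~ u' -> tliftU (sandwich_r u) x ~ tliftU (sandwich_r u') x.
Proof. by move=> h; apply: tlift_ext => c d; rewrite /sandwich_r h. Qed.
Lemma sandwich_l0 (y : UU) : tliftU (sandwich_l (tscal 0)) y ~ tscal 0.
Proof.
transitivity (tliftU (fun _ _ => tscal 0) y); last exact: tlift0.
by apply: tlift_ext => c d; rewrite /sandwich_l tmul0r tmul0l.
Qed.
Lemma sandwich_lD u1 u2 (y : UU) :
  tliftU (sandwich_l (tadd u1 u2)) y ~ tadd (tliftU (sandwich_l u1) y) (tliftU (sandwich_l u2) y).
Proof. by rewrite -tliftD; apply: tlift_ext => c d; rewrite /sandwich_l aeq_mulDr aeq_mulDl. Qed.
Lemma sandwich_lZ k u (y : UU) :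
  tliftU (sandwich_l (tsmul k u)) y ~ tsmul k (tliftU (sandwich_l u) y).
Proof. by rewrite -tliftZ; apply: tlift_ext => c d; rewrite /sandwich_l tmul_smulr tmul_smull. Qed.
Lemma sandwich_l_scal e (y : UU) : tliftU (sandwich_l (tscal e)) y ~ tsmul e (m_S_id y).
Proof. by rewrite /m_S_id -tliftZ; apply: tlift_ext => c d; rewrite /sandwich_l tmul_scalr tmul_smull. Qed.
Lemma sandwich_r_scal e (x : UU) : tliftU (sandwich_r (tscal e)) x ~ tsmul e (m_id_S x).
Proof. by rewrite /m_id_S -tliftZ; apply: tlift_ext => c d; rewrite /sandwich_r tmul_scalr tmul_smull. Qed.

Lemma m_S_idM (x y : UU) : m_S_id (TU x y) ~ tliftU (sandwich_l (m_S_id x)) y.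
Proof.
elim: x => [a b||x1 IH1 x2 IH2|k x IH]; last 3 first.
- by rewrite /m_S_id /= sandwich_l0.
- by rewrite /m_S_id /= -!/(m_S_id _) IH1 IH2 sandwich_lD.
- by rewrite /m_S_id /= -!/(m_S_id _) IH sandwich_lZ.
elim: y => [c d||y1 IH1 y2 IH2|k y IH].
- by rewrite /m_S_id /sandwich_l /= -!aeq_mulA.
- by [].
- by rewrite /m_S_id /= -!/(m_S_id _) IH1 IH2.
- by rewrite /m_S_id /= -!/(m_S_id _) IH.
Qed.

Lemma m_id_SM (x y : UU) : m_id_S (TU x y) ~ tliftU (sandwich_r (m_id_S y)) x.
Proof.
elim: x => [a b||x1 IH1 x2 IH2|k x IH]; last 3 first.
- by [].
- by rewrite /m_id_S /= -!/(m_id_S _) IH1 IH2.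
- by rewrite /m_id_S /= -!/(m_id_S _) IH.
rewrite /sandwich_r /=.
elim: y => [c d||y1 IH1 y2 IH2|k y IH].
- by rewrite /m_id_S /= -!aeq_mulA.
- by rewrite /m_id_S /= tmul0r tmul0l.
- by rewrite /m_id_S /= -!/(m_id_S _) IH1 IH2 aeq_mulDr aeq_mulDl.
- by rewrite /m_id_S /= -!/(m_id_S _) IH tmul_smulr tmul_smull.
Qed.

Theorem antipode_axiom t :
  m_S_id (Delta t) ~ tscal (eps t) /\ m_id_S (Delta t) ~ tscal (eps t).
Proof.
elim: t => [[i|l]|c|a [IHa IHa'] b [IHb IHb']|a [IHa IHa'] b [IHb IHb']].
- rewrite /m_S_id /m_id_S /=; split.
  + rewrite tmul_smull -(aeq_mulA _ (tmul (K _) (E i))) mulKK -/(nuX i) -/(muX i).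
    by rewrite nuX_muX K0 aeq_mul1r aeq_addN.
  + rewrite tmul_smulr !aeq_mulA mulKKN aeq_mul1l -/(muX i) Xopp_muX -/(nuX i).
    by rewrite aeq_addC aeq_addN.
- by rewrite /m_S_id /m_id_S /= mulKNK mulKKN.
- by rewrite /m_S_id /m_id_S /= !aeq_mul1l tsmul_scal mulr1.
- rewrite /m_S_id /m_id_S /= -!/(m_S_id _) -!/(m_id_S _) IHa IHb IHa' IHb'.
  by rewrite !tscalD.
- split.
  + by rewrite /= m_S_idM (sandwich_l_aeq _ IHa) sandwich_l_scal IHb tsmul_scal.
  + by rewrite /= m_id_SM (sandwich_r_aeq _ IHb') sandwich_r_scal IHa' tsmul_scal mulrC.
Qed.

End CounitAntipode.

Theorem mainTheorem6 :
  (forall t s : Uterm, Ueq t s -> UUeq (Delta t) (Delta s)) /\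
  (forall t s : Uterm, Ueq t s -> eps t = eps s) /\
  (forall t s : Uterm, Ueq t s -> Ueq (antipode t) (antipode s)) /\
  (forall t : Uterm, UUUeq (tassoc (Delta_id (Delta t))) (id_Delta (Delta t))) /\
  (forall t : Uterm, Ueq (eps_id (Delta t)) t /\ Ueq (id_eps (Delta t)) t) /\
  (forall t : Uterm, Ueq (m_S_id (Delta t)) (tscal (eps t)) /\
                     Ueq (m_id_S (Delta t)) (tscal (eps t))).
Proof.
split; first exact: Delta_aeq.
split; first exact: eps_aeq.
split; first exact: antipode_aeq.
split; first exact: coassoc.
split; first exact: counit.
exact: antipode_axiom.
Qed.
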